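(* Let $(A,B)$ be a weakly non-singular pair in $\mathrm{Sp}(n,1)$ with associated points $p=(p_1,\dots,p_{2n})$. Suppose $\mathbf p=(\mathbf p_1,\dots,\mathbf p_{2n})$ is a lift of $p$ whose Gram matrix $G(\mathbf p)=(\langle\mathbf p_i,\mathbf p_j\rangle)$ is normalized, and let $\mathbf p'=(\mathbf p_1\lambda_1,\dots,\mathbf p_{2n}\lambda_{2n})$, $\lambda_i\in\mathbb H\setminus\{0\}$, be another lift of $p$ whose Gram matrix $G(\mathbf p')$ is also normalized. Then $\lambda_1=\lambda_2=\dots=\lambda_{2n}$ and $\lambda_1\in\mathrm{Sp}(1)$ (i.e. $|\lambda_1|=1$).
   Context: $\mathbb H^{n,1}$: right $\mathbb H$-vector space $\mathbb H^{n+1}$ with Hermitian form $\langle\mathbf z,\mathbf w\rangle=\mathbf w^*H\mathbf z=\bar w_{n+1}z_1+\bar w_2z_2+\dots+\bar w_nz_n+\bar w_1z_{n+1}$ (so $\langle\mathbf z\lambda,\mathbf w\mu\rangle=\bar\mu\langle\mathbf z,\mathbf w\rangle\lambda$); $\mathrm{Sp}(n,1)$ preserves it. A loxodromic $A$ (exactly two fixed points on the boundary $\partial\mathbf H^n_{\mathbb H}$ = projectivized null vectors, no real eigenvalue) has null eigenvectors $\mathbf a_A,\mathbf r_A$ (attracting/repelling fixed points $a_A,r_A$) and positive eigenvectors $\mathbf x_{j,A}$, $1\le j\le n-1$, spanning the eigenspaces of the remaining right-eigenvalue classes (points $x_{j,A}$). A weakly non-singular pair is a pair of regular loxodromics without common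 fixed point satisfying a flag genericity condition which guarantees, after reindexing, that for $1\le k\le n-2$: $\langle\mathbf x_{k,A},\mathbf a_B\rangle,\langle\mathbf x_{k,B},\mathbf a_A\rangle,\langle\mathbf r_A,\mathbf x_{k,B}\rangle,\langle\mathbf r_B,\mathbf x_{k,A}\rangle\ne0$. Associated points: $p_1=a_A,p_2=r_A,p_3=a_B,p_4=r_B$, $p_j=x_{j-4,A}$ ($5\le j\le n+2$), $p_k=x_{k-(n+2),B}$ ($n+3\le k\le 2n$). The Gram matrix $(g_{ij})$, $g_{ij}=\langle\mathbf p_i,\mathbf p_j\rangle$, is normalized if $g_{12}=g_{13}=g_{14}=1$, $|g_{23}|=1$, $g_{1k}=1$ for $n+3\le k\le 2n$, and $g_{3j}=1$ for $5\le j\le n+2$ (equivalently $\langle\mathbf a_A,\mathbf r_A\rangle=\langle\mathbf a_A,\mathbf a_B\rangle=\langle\mathbf a_A,\mathbf r_B\rangle=\langle\mathbf a_A,\mathbf x_{k,B}\rangle=\langle\mathbf a_B,\mathbf x_{k,A}\rangle=1$, $|\langle\mathbf a_B,\mathbf r_A\rangle|=1$). *)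

From HB Require Import structures.
From mathcomp Require Import all_boot all_order all_algebra.
Set Implicit Arguments.
Unset Strict Implicit.
Unset Printing Implicit Defensive.
Import Order.TTheory GRing.Theory Num.Theory.
Local Open Scope ring_scope.

Section Quaternions.
Variable R : rcfType.

Record quat := Quat { qre : R; qi : R; qj : R; qk : R }.

Definition qzero : quat := Quat 0 0 0 0.
Definition qone : quat := Quat 1 0 0 0.
Definition qadd (p q : quat) : quat :=
  Quat (qre p + qre q) (qi p + qi q) (qj p + qj q) (qk p + qk q).
Definition qmul (p q : quat) : quat :=
  Quat (qre p * qre q - qi p * qi q - qj p * qj q - qk p * qk q)
       (qre p * qi q + qi p * qre q + qj p * qk q - qk p * qj q)
       (qre p * qj q - qi p * qk q + qj p * qre q + qk p * qi q)
       (qre p * qk q + qi p * qj q - qj p * qi q + qk p * qre q).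
Definition qconj (q : quat) : quat := Quat (qre q) (- qi q) (- qj q) (- qk q).
Definition qnorm2 (q : quat) : R :=
  qre q ^+ 2 + qi q ^+ 2 + qj q ^+ 2 + qk q ^+ 2.
Definition qnorm (q : quat) : R := Num.sqrt (qnorm2 q).
Definition qinv (q : quat) : quat :=
  Quat (qre q / qnorm2 q) (- qi q / qnorm2 q) (- qj q / qnorm2 q)
       (- qk q / qnorm2 q).
Definition qreal (q : quat) : Prop := qi q = 0 /\ qj q = 0 /\ qk q = 0.
Definition qpos (q : quat) : Prop := qreal q /\ 0 < qre q.
Definition qsum (m : nat) (F : 'I_m -> quat) : quat :=
  \big[qadd/qzero]_(i < m) F i.
Definition qsimilar (mu nu : quat) : Prop :=
  exists q, q <> qzero /\ nu = qmul (qmul (qinv q) mu) q.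

End Quaternions.

Section Hn1.
Variables (R : rcfType) (n : nat).

(* vectors of the right H-vector space H^{n+1}, coordinates 0..n
   (paper's coordinates 1..n+1) *)
Definition hvec := 'I_n.+1 -> quat R.
Definition hmat := 'I_n.+1 -> 'I_n.+1 -> quat R.

Definition swapidx (i : 'I_n.+1) : 'I_n.+1 :=
  if i == ord0 then ord_max else if i == ord_max then ord0 else i.

(* <z, w> = w^* H z = conj(w_{n+1}) z_1 + conj(w_2) z_2 + ... + conj(w_1) z_{n+1} *)
Definition herm (z w : hvec) : quat R :=
  qsum (fun i => qmul (qconj (w (swapidx i))) (z i)).

Definition vscale (z : hvec) (l : quat R) : hvec := fun i => qmul (z i) l.
Definition mact (M : hmat) (z : hvec) : hvec :=
  fun i => qsum (fun j => qmul (M i j) (z j)).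

Definition vnonzero (z : hvec) : Prop := exists i, z i <> qzero R.
Definition proj_eq (z w : hvec) : Prop := exists q, forall i, w i = qmul (z i) q.

Definition in_Sp (M : hmat) : Prop :=
  forall z w, herm (mact M z) (mact M w) = herm z w.

Definition is_null (z : hvec) : Prop := vnonzero z /\ herm z z = qzero R.
Definition is_pos (z : hvec) : Prop := qpos (herm z z).

Definition eigvec (M : hmat) (z : hvec) (mu : quat R) : Prop :=
  vnonzero z /\ forall i, mact M z i = qmul (z i) mu.

Definition bdry_fixed (M : hmat) (z : hvec) : Prop :=
  is_null z /\ exists mu, eigvec M z mu.

Definition loxodromic (M : hmat) : Prop :=
  in_Sp M /\
  (exists z1 z2, [/\ bdry_fixed M z1, bdry_fixed M z2, ~ proj_eq z1 z2 &
     forall z, bdry_fixed M z -> proj_eq z1 z \/ proj_eq z2 z]) /\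
  (forall z mu, eigvec M z mu -> ~ qreal mu).

Definition class_eigvec (M : hmat) (z : hvec) (mu : quat R) : Prop :=
  exists nu, qsimilar mu nu /\ eigvec M z nu.
Definition spans_eigspace (M : hmat) (z : hvec) (mu : quat R) : Prop :=
  class_eigvec M z mu /\ forall w, class_eigvec M w mu -> proj_eq z w.

(* M is a regular loxodromic with attracting null eigenvector a, repelling
   null eigenvector r, and positive eigenvectors x 0, ..., x (n-2)
   (paper's x_1,...,x_{n-1}) spanning the eigenspaces of the remaining
   eigenvalue classes; regular = the n+1 eigenvalue classes are pairwise
   distinct. *)
Definition reg_lox_data (M : hmat) (a r : hvec) (x : nat -> hvec) : Prop :=
  loxodromic M /\
  exists (mua mur : quat R) (mux : nat -> quat R),
    let ev := fun i : nat => if i == 0%N then mua else if i == 1%N then mur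
                             else mux (i - 2)%N in
    [/\ is_null a /\ eigvec M a mua /\ 1 < qnorm mua,
        is_null r /\ eigvec M r mur /\ qnorm mur < 1,
        (forall j, (j < n - 1)%N -> is_pos (x j) /\ spans_eigspace M (x j) (mux j)),
        (forall i j, (i < n.+1)%N -> (j < n.+1)%N -> i <> j ->
           ~ qsimilar (ev i) (ev j)) &
        (forall z nu, eigvec M z nu -> exists i, (i < n.+1)%N /\ qsimilar (ev i) nu)].

(* p (0-based, p 0 .. p (2n-1)) is a lift of the associated points of the
   weakly non-singular pair (A,B), for an indexing of the positive
   eigenvectors satisfying the non-vanishing conditions. *)
Definition wns_assoc_lift (A B : hmat) (p : nat -> hvec) : Prop :=
  [/\ exists xl, reg_lox_data A (p 0%N) (p 1%N)
                   (fun j => if (j < n - 2)%N then p (4 + j)%N else xl),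
      exists yl, reg_lox_data B (p 2%N) (p 3%N)
                   (fun k => if (k < n - 2)%N then p (n + 2 + k)%N else yl),
      ~ (exists z, bdry_fixed A z /\ bdry_fixed B z) &
      forall k, (k < n - 2)%N ->
        [/\ herm (p (4 + k)%N) (p 2%N) <> qzero R,
            herm (p (n + 2 + k)%N) (p 0%N) <> qzero R,
            herm (p 1%N) (p (n + 2 + k)%N) <> qzero R &
            herm (p 3%N) (p (4 + k)%N) <> qzero R]].

Definition gram (p : nat -> hvec) (i j : nat) : quat R := herm (p i) (p j).

(* normalized Gram matrix, 0-based indices *)
Definition normalized (g : nat -> nat -> quat R) : Prop :=
  [/\ g 0%N 1%N = qone R /\ g 0%N 2%N = qone R /\ g 0%N 3%N = qone R,
      qnorm (g 1%N 2%N) = 1,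
      (forall k, (n + 2 <= k < 2 * n)%N -> g 0%N k = qone R) &
      (forall j, (4 <= j < n + 2)%N -> g 2%N j = qone R)].

End Hn1.

(* Rescaling the lift by [lam] changes each Gram entry to
   [conj (lam j) * g_ij * lam i].  Each normalization condition [g_ij = 1]
   imposed on both lifts therefore gives [conj (lam j) * lam i = 1], hence
   [|lam i| |lam j| = 1], and [|g_12| = 1] gives [|lam 1| |lam 2| = 1].  The
   three relations among [|lam 0|, |lam 1|, |lam 2|] force all three norms to
   be 1, and for a unit quaternion [conj a * b = 1] means [b = a].  The
   normalized entries link every index to 0 or to 2, so all [lam i] agree. *)
From mathcomp Require Import all_boot all_order all_algebra.
From mathcomp Require Import ring lra.
Set Implicit Arguments.
Unset Strict Implicit.
Unset Printing Implicit Defensive.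
Import Order.TTheory GRing.Theory Num.Theory.
Local Open Scope ring_scope.

Section QuaternionFacts.
Variable R : rcfType.
Implicit Types a b x y : quat R.

Lemma quat_eq a b : qre a = qre b -> qi a = qi b -> qj a = qj b ->
  qk a = qk b -> a = b.
Proof. by case: a => ????; case: b => ???? /= -> -> -> ->. Qed.

Lemma qmulA x y (z : quat R) : qmul x (qmul y z) = qmul (qmul x y) z.
Proof. by case: x => ????; case: y => ????; case: z => ????; apply: quat_eq => /=; ring. Qed.

Lemma qmul1q x : qmul (qone R) x = x.
Proof. by case: x => ????; apply: quat_eq => /=; ring. Qed.

Lemma qmulq1 x : qmul x (qone R) = x.
Proof. by case: x => ????; apply: quat_eq => /=; ring. Qed.

Lemma qmul_conj x : qmul x (qconj x) = Quat (qnorm2 x) 0 0 0.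
Proof. by case: x => ????; apply: quat_eq; rewrite /qnorm2 /=; ring. Qed.

Lemma qnorm2M x y : qnorm2 (qmul x y) = qnorm2 x * qnorm2 y.
Proof. by case: x => ????; case: y => ????; rewrite /qnorm2 /=; ring. Qed.

Lemma qnorm2_conj x : qnorm2 (qconj x) = qnorm2 x.
Proof. by case: x => ????; rewrite /qnorm2 /=; ring. Qed.

Lemma qnorm2_ge0 x : 0 <= qnorm2 x.
Proof. by case: x => ????; rewrite /qnorm2 /=; nra. Qed.

Lemma qnorm2_one : qnorm2 (qone R) = 1.
Proof. by rewrite /qnorm2 /=; ring. Qed.

Lemma qnorm_eq1 x : (qnorm x = 1) <-> (qnorm2 x = 1).
Proof.
rewrite /qnorm; split=> [E|->]; last exact: sqrtr1.
by rewrite -(sqr_sqrtr (qnorm2_ge0 x)) E expr1n.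
Qed.

Lemma qconj_mul_eq1_norm a b :
  qmul (qconj a) b = qone R -> qnorm2 a * qnorm2 b = 1.
Proof. by move=> E; rewrite -qnorm2_conj -qnorm2M E qnorm2_one. Qed.

Lemma qconj_mul_eq1_eq a b :
  qnorm2 b = 1 -> qmul (qconj a) b = qone R -> a = b.
Proof.
move=> Nb E; have Na : qnorm2 a = 1.
  by have := qconj_mul_eq1_norm E; rewrite Nb mulr1.
have a_conj_a : qmul a (qconj a) = qone R by rewrite qmul_conj Na.
by rewrite -[b]qmul1q -a_conj_a -qmulA E qmulq1.
Qed.

End QuaternionFacts.

Lemma norm_triangle_eq1 (R : realDomainType) (x y z : R) :
  0 <= x -> 0 <= y -> 0 <= z -> x * y = 1 -> x * z = 1 -> y * z = 1 -> x = 1.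
Proof. by move=> *; nra. Qed.

Section RescaledGram.
Variables (R : rcfType) (n : nat).

Lemma herm_vscale (z w : hvec R n) (l m : quat R) :
  herm (vscale z l) (vscale w m) = qmul (qmul (qconj m) (herm z w)) l.
Proof.
rewrite /herm /qsum.
rewrite (big_morph (fun x => qmul (qmul (qconj m) x) l) (id1 := qzero R)
  (op1 := @qadd R)).
- apply: eq_bigr => i _; rewrite /vscale.
  case: (w _) => ????; case: (z _) => ????; case: m => ????; case: l => ????.
  by apply: quat_eq => /=; ring.
- move=> [????] [????]; case: m => ????; case: l => ????.
  by apply: quat_eq => /=; ring.
- by case: m => ????; case: l => ????; apply: quat_eq => /=; ring.
Qed.

Variables (p : nat -> hvec R n) (lam : nat -> quat R).

Let p' := fun i => vscale (p i) (lam i).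

Lemma gram_vscale i j :
  gram p' i j = qmul (qmul (qconj (lam j)) (gram p i j)) (lam i).
Proof. exact: herm_vscale. Qed.

Lemma gram_vscale_one i j : gram p i j = qone R -> gram p' i j = qone R ->
  qmul (qconj (lam j)) (lam i) = qone R.
Proof. by rewrite gram_vscale => ->; rewrite qmulq1. Qed.

Lemma gram_vscale_norm1 i j : qnorm (gram p i j) = 1 -> qnorm (gram p' i j) = 1 ->
  qnorm2 (lam i) * qnorm2 (lam j) = 1.
Proof.
rewrite gram_vscale !qnorm_eq1 !qnorm2M qnorm2_conj => ->.
by rewrite mulr1 mulrC.
Qed.

End RescaledGram.

Theorem mainTheorem7 (R : rcfType) (n : nat) (A B : hmat R n)
    (p : nat -> hvec R n) (lam : nat -> quat R) :
  (2 <= n)%N ->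
  wns_assoc_lift A B p ->
  normalized n (gram p) ->
  (forall i, (i < 2 * n)%N -> lam i <> qzero R) ->
  normalized n (gram (fun i => vscale (p i) (lam i))) ->
  (forall i, (i < 2 * n)%N -> lam i = lam 0%N) /\ qnorm (lam 0%N) = 1.
Proof.
move=> _ _ [[g01 [g02 g03]] g12 g0k g2j] _ [[h01 [h02 h03]] h12 h0k h2j].
have c01 := gram_vscale_one g01 h01; have c02 := gram_vscale_one g02 h02.
have N0 : qnorm2 (lam 0%N) = 1.
  apply: norm_triangle_eq1 (qnorm2_ge0 _) (qnorm2_ge0 (lam 1%N))
    (qnorm2_ge0 (lam 2%N)) _ _ (gram_vscale_norm1 g12 h12).
  - by rewrite mulrC; apply: qconj_mul_eq1_norm c01.
  - by rewrite mulrC; apply: qconj_mul_eq1_norm c02.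
have to0 j : qmul (qconj (lam j)) (lam 0%N) = qone R -> lam j = lam 0%N.
  exact: qconj_mul_eq1_eq.
have e2 := to0 _ c02.
split=> [i lt_i_2n|]; last exact/qnorm_eq1.
have [lt_i4|ge_i4] := ltnP i 4.
  case: i lt_i4 {lt_i_2n} => [|[|[|[|i]]]] //= _.
  - exact: to0 c01.
  - exact/to0/(gram_vscale_one g03 h03).
have [lt_i_n2|ge_i_n2] := ltnP i (n + 2).
  have Hi : (4 <= i < n + 2)%N by rewrite ge_i4 lt_i_n2.
  rewrite -e2; apply: qconj_mul_eq1_eq; first by rewrite e2.
  exact: gram_vscale_one (g2j _ Hi) (h2j _ Hi).
have Hi : (n + 2 <= i < 2 * n)%N by rewrite ge_i_n2 lt_i_2n.
exact/to0/(gram_vscale_one (g0k _ Hi) (h0k _ Hi)).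
Qed.
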